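(* Let $R$ be a real $n\times n$ payoff matrix, let $S,F$ be $n\times n$ row-stochastic matrices, and for $\lambda\in[0,1]$ set $Q(\lambda)=(1-\lambda)S+\lambda F$, $R(\lambda)=Q(\lambda)RQ(\lambda)^T$ and $\tilde R(\lambda)=R(\lambda)-\mathbf d_{R(\lambda)}\mathbf u^T$, where $\mathbf d_{R(\lambda)}$ is the column vector of diagonal entries of $R(\lambda)$ and $\mathbf u$ is the all-ones column vector. Consider the replicator dynamics on the simplex $S^n=\{x\in\mathbb R^n: x_i\ge 0,\ \sum_i x_i=1\}$, $$\dot x_i=x_i\big((\tilde R(\lambda)x)_i-x^T\tilde R(\lambda)x\big),\quad i=1,\dots,n.$$ Let $i\neq j$ and suppose that, for $\lambda$ near a value $\lambda^c$, $\tilde{\mathbf x}=\alpha\mathbf e_i+(1-\alpha)\mathbf e_j$ with $\alpha\in(0,1)$ is a fixed point of these dynamics which is stable (all eigenvalues of the Jacobian at $\tilde{\mathbf x}$ have negative real parts) for $\lambda$ on one side of $\lambda^c$. Suppose that for some $k\neq i,j$ the function $$\phi_k(\lambda)=\mathbf e_k^T\tilde R(\lambda)\tilde{\mathbf x}-\tilde{\mathbf x}^T\tilde R(\lambda)\tilde{\mathbf x}$$ changes sign from $<0$ to $>0$ at $\lambda^c$. Then $\tilde{\mathbf x}$ changes its qualitative behavior at $\lambda^c$ and becomes unstable (after $\lambda$ crosses $\lambda^c$).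
   Context: $\mathbf e_1,\dots,\mathbf e_n$ denote the standard unit basis vectors of $\mathbb R^n$. $Q(\lambda)$ is the incompetence matrix: its $(i,j)$ entry is the probability that strategy $j$ is executed when strategy $i$ is selected; $\lambda$ is the incompetence (training) parameter. *)

From HB Require Import structures.
From mathcomp Require Import all_boot all_order all_algebra.
From mathcomp Require Import all_classical all_reals.
From mathcomp Require Import topology normedtype derive.
From mathcomp Require Import complex.
Import Order.TTheory GRing.Theory Num.Theory.
Import numFieldNormedType.Exports.

Set Implicit Arguments.
Unset Strict Implicit.
Unset Printing Implicit Defensive.

Local Open Scope ring_scope.

Section Defs.
Variables (R : realType) (n : nat).

Definition row_stochastic (S : 'M[R]_n) : Prop :=
  (forall a b, 0 <= S a b) /\ (forall a, \sum_b S a b = 1).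

Definition Qlam (S F : 'M[R]_n) (l : R) : 'M[R]_n := (1 - l) *: S + l *: F.

Definition Rlam (Rm S F : 'M[R]_n) (l : R) : 'M[R]_n :=
  Qlam S F l *m Rm *m (Qlam S F l)^T.

Definition Rtilde (Rm S F : 'M[R]_n) (l : R) : 'M[R]_n :=
  Rlam Rm S F l - \matrix_(a, b) Rlam Rm S F l a a.

(* points of R^n are represented as row vectors 'rV[R]_n;
   (A x)_a = (x *m A^T) 0 a and x^T A x = (x *m A^T *m x^T) 0 0 *)
Definition Ax (A : 'M[R]_n) (x : 'rV[R]_n) (a : 'I_n) : R := (x *m A^T) 0 a.
Definition xAx (A : 'M[R]_n) (x : 'rV[R]_n) : R := (x *m A^T *m x^T) 0 0.

Definition replicator (A : 'M[R]_n) (x : 'rV[R]_n) : 'rV[R]_n :=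
  \row_a (x 0 a * (Ax A x a - xAx A x)).

Definition evec (a : 'I_n) : 'rV[R]_n := delta_mx 0 a.

(* Jacobian of the vector field f at x (mathcomp-analysis 'J, which acts on
   row vectors, i.e. it is the transpose of the usual Jacobian; it has the
   same eigenvalues), viewed as a complex matrix *)
Definition jacC (f : 'rV[R]_n -> 'rV[R]_n) (x : 'rV[R]_n) : 'M[complex.complex R]_n :=
  map_mx (complex.real_complex R) (jacobian f x).

Definition stable_fp (f : 'rV[R]_n -> 'rV[R]_n) (x : 'rV[R]_n) : Prop :=
  forall z : complex.complex R, eigenvalue (jacC f x) z -> complex.Re z < 0.

Definition unstable_fp (f : 'rV[R]_n -> 'rV[R]_n) (x : 'rV[R]_n) : Prop :=
  exists z : complex.complex R, eigenvalue (jacC f x) z /\ 0 < complex.Re z.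

Definition phi (A : 'M[R]_n) (k : 'I_n) (x : 'rV[R]_n) : R :=
  Ax A x k - xAx A x.

End Defs.
Arguments evec {R n}.

From HB Require Import structures.
From mathcomp Require Import all_boot all_order all_algebra.
From mathcomp Require Import all_classical all_reals.
From mathcomp Require Import topology normedtype derive.
From mathcomp Require Import complex.
Import Order.TTheory GRing.Theory Num.Theory.
Import numFieldNormedType.Exports.
Local Open Scope ring_scope.

(* Every coordinate face [x_k = 0] of R^n is invariant under the replicator
   field, so its linearization at a point of the face maps the direction e_k
   to phi_k(x) e_k: the invasion fitness phi_k(x) is an eigenvalue of the
   Jacobian.  Once it is positive the fixed point is unstable. *)

Lemma eigenvalue_trmx (F : fieldType) m (M : 'M[F]_m) a :
  eigenvalue M^T a = eigenvalue M a.
Proof.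
rewrite !eigenvalue_root_char /char_poly.
suff -> : char_poly_mx M^T = (char_poly_mx M)^T by rewrite det_tr.
by rewrite /char_poly_mx linearB /= tr_scalar_mx map_trmx.
Qed.

Section CoordDifferential.
Variables (R : realType) (m p : nat).

Lemma diff_coord (i : 'I_m) (j : 'I_p) (x v : 'M[R]_(m, p)) :
  'd (fun y : 'M[R]_(m, p) => y i j) x v = v i j.
Proof.
have @f : {linear 'M[R]_(m, p) -> R^o}.
  by exists (fun y : 'M[R]_(m, p) => y i j); do 2![eexists]; do ?[constructor];
     rewrite ?mxE// => ? *; rewrite ?mxE//; move=> ?; rewrite !mxE.
by rewrite (_ : (fun _ => _) = f) // diff_lin //; apply: coord_continuous.
Qed.

End CoordDifferential.

Section ReplicatorLinearization.
Variables (R : realType) (n : nat) (A : 'M[R]_n).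
Local Notation V := 'rV[R]_n.

Lemma AxE (x : V) a : Ax A x a = \sum_b A a b * x 0 b.
Proof. by rewrite /Ax !mxE; apply: eq_bigr => b _; rewrite mxE mulrC. Qed.

Lemma xAxE (x : V) : xAx A x = \sum_b Ax A x b * x 0 b.
Proof. by rewrite /xAx [LHS]mxE; apply: eq_bigr => b _; rewrite [x^T _ _]mxE. Qed.

Lemma differentiable_sum_fun (f : 'I_n -> V -> R) (x : V) :
  (forall b, differentiable (f b) x) -> differentiable (fun y => \sum_b f b y) x.
Proof.
by move=> df; rewrite -(fct_sumE (index_enum _) _ f); apply: differentiable_sum.
Qed.

Lemma differentiable_Ax a (x : V) : differentiable (fun y => Ax A y a) x.
Proof.
rewrite (_ : (fun y => _) = fun y : V => \sum_b A a b * y 0 b); last first.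
  by apply/funext => y; rewrite AxE.
apply: differentiable_sum_fun => b.
exact: (differentiableZ (f := fun y : V => y 0 b : R^o)) (differentiable_coord _ _ _).
Qed.

Lemma differentiable_xAx (x : V) : differentiable (xAx A) x.
Proof.
rewrite (_ : xAx A = fun y : V => \sum_b Ax A y b * y 0 b); last first.
  by apply/funext => y; rewrite xAxE.
apply: differentiable_sum_fun => b.
exact: differentiableM (differentiable_Ax b x) (differentiable_coord _ _ _).
Qed.

Lemma differentiable_replicator_coord a (x : V) :
  differentiable (fun y => replicator A y 0 a) x.
Proof.
rewrite (_ : (fun y => _) = fun y : V => y 0 a * (Ax A y a - xAx A y)); last first.
  by apply/funext => y; rewrite mxE.
apply: differentiableM; first exact: differentiable_coord.
exact: differentiableB (differentiable_Ax a x) (differentiable_xAx x).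
Qed.

Lemma differentiable_replicator (x : V) : differentiable (replicator A) x.
Proof.
rewrite (_ : replicator A = \sum_a (fun y => replicator A y 0 a *: evec a)).
  apply: differentiable_sum => a.
  exact: differentiableZl (differentiable_replicator_coord a x).
by apply/funext => y; rewrite fct_sumE [LHS]row_sum_delta.
Qed.

Lemma diff_replicator_face k (x v : V) : x 0 k = 0 ->
  ('d (replicator A) x v) 0 k = phi A k x * v 0 k.
Proof.
move=> xk0.
rewrite -[LHS](@diff_coord _ _ _ 0 k (replicator A x)) -[LHS]/(('d _ _ \o 'd _ _) v).
rewrite -diff_comp; [|exact: differentiable_replicator|exact: differentiable_coord].
rewrite (_ : _ \o _ = (fun y : V => y 0 k) * (fun y => Ax A y k - xAx A y)); last first.
  by apply/funext => y; rewrite /= mxE.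
have dfitness : differentiable (fun y => Ax A y k - xAx A y) x.
  exact: differentiableB (differentiable_Ax k x) (differentiable_xAx x).
rewrite diffM; [|exact: differentiable_coord|exact: dfitness].
rewrite /= xk0 fctE /= diff_coord [X in X + _](_ : _ = 0) ?add0r //.
exact: scale0r.
Qed.

Lemma eigenvalue_jacobian_replicator_face k (x : V) : x 0 k = 0 ->
  eigenvalue (jacobian (replicator A) x) (phi A k x).
Proof.
(* ['J f x] acts on row vectors, so [e_k] is an eigenvector of its transpose. *)
move=> xk0; rewrite -eigenvalue_trmx; apply/eigenvalueP.
have ek_neq0 : delta_mx 0 k != 0 :> V.
  by apply/eqP => /matrixP/(_ 0 k); rewrite !mxE !eqxx; apply/eqP; exact: oner_neq0.
exists (delta_mx 0 k) => //.
apply/rowP => b; rewrite -rowE !mxE diff_replicator_face // !mxE eqxx eq_sym.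
by case: (b == k); rewrite /= ?mulr1 ?mulr0.
Qed.

Lemma unstable_replicator_face k (x : V) : x 0 k = 0 -> 0 < phi A k x ->
  unstable_fp (replicator A) x.
Proof.
move=> xk0 phi_gt0; exists (phi A k x)%:C%C; split => //.
by rewrite /jacC eigenvalue_map eigenvalue_jacobian_replicator_face.
Qed.

End ReplicatorLinearization.

Theorem lemma1 (R : realType) (n : nat) (Rm S F : 'M[R]_n)
  (i j k : 'I_n) (alpha lc delta : R) :
  row_stochastic S -> row_stochastic F ->
  i != j -> k != i -> k != j ->
  0 < alpha < 1 ->
  0 < delta ->
  let xt := alpha *: evec i + (1 - alpha) *: evec j in
  (* xt is a fixed point for all lambda in [0,1] near lc *)
  (forall l, 0 <= l <= 1 -> lc - delta < l < lc + delta ->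
     replicator (Rtilde Rm S F l) xt = 0) ->
  (* xt is stable for lambda on one side (below) of lc *)
  (forall l, 0 <= l <= 1 -> lc - delta < l < lc ->
     stable_fp (replicator (Rtilde Rm S F l)) xt) ->
  (* phi_k changes sign from < 0 to > 0 at lc *)
  (forall l, 0 <= l <= 1 -> lc - delta < l < lc ->
     phi (Rtilde Rm S F l) k xt < 0) ->
  (forall l, 0 <= l <= 1 -> lc < l < lc + delta ->
     0 < phi (Rtilde Rm S F l) k xt) ->
  (* conclusion: xt is unstable after lambda crosses lc *)
  forall l, 0 <= l <= 1 -> lc < l < lc + delta ->
    unstable_fp (replicator (Rtilde Rm S F l)) xt.
Proof.
move=> _ _ _ ki kj _ _ xt _ _ _ phi_after l l01 l_after.
have xtk0 : xt 0 k = 0.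
  by rewrite /xt /evec !mxE (negbTE ki) (negbTE kj) /= !mulr0 addr0.
exact: unstable_replicator_face xtk0 (phi_after l l01 l_after).
Qed.
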